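(* For all sufficiently large $n$, the modified multi-phase process described in the context returns an element of $S^-_{3/4}$ with probability at least $1-2^{-n/5}$.
   Context: Let $n\ge2$ be an integer such that $m=n/\log_2 n$ is an integer, and let $S'$ be a set of $m$ distinct elements of a totally ordered set. For $\rho\in(0,1]$, $S^-_\rho$ denotes the set of the $\lceil \rho m\rceil$ smallest elements of $S'$ and $S^+_\rho=S'\setminus S^-_\rho$. There are two oracles $\mathcal{O}_1,\mathcal{O}_2$ which can be queried with an element $x\in S'$ and answer ''relevant'' or ''not relevant'' in constant time, all answers being mutually independent; for constants $p_1,p_2\in[0,\tfrac12)$: $\mathcal{O}_1$ reports $x$ relevant with probability at least $1-p_1$ if $x\in S^-_{1/6}$ and at most $p_1$ if $x\in S^+_{1/3}$; $\mathcal{O}_2$ reports $x$ relevant with probability at least $1-p_2$ if $x\in S^-_{1/3}$ and at most $p_2$ if $x\in S^+_{3/4}$. For $q\in[0,\tfrac12)$ let $c_q=\lceil 4(1-q)/(1-2q)^2\rceil$. Let $\eta = 1+\lceil \log_2 \frac{n}{\log_2 n}\rceil$. Modified multi-phase process: the elements of $S'$ are considered one at a time. For the current element $x$, a preliminary test is performed consisting of $8c_{p_1}\lceil \ln n\rceil+1$ queries to $\mathcal{O}_1$ on $x$; it is passed if the majority report $x$ relevant, otherwise $x$ is discarded and the next element is considered. Then, for $i=1,\dots,\eta$, the $i$-th test consists of $2\lceil 2^i\ln n\rceil c_{p_2}+1$ queries to $\mathcal{O}_2$ on $x$ and is passed if the majority report $x$ relevant; if $x$ fails a test it is discarded and the next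 element is considered. The process returns the first element that passes the $\eta$-th test (if no element does, it returns nothing, which counts as not returning an element of $S^-_{3/4}$). Here $\ln$ is the natural logarithm. *)

From HB Require Import structures.
From mathcomp Require Import all_boot all_order all_algebra.
From mathcomp Require Import reals exp.
Unset Printing Implicit Defensive.
Import Order.TTheory GRing.Theory Num.Theory.
Local Open Scope ring_scope.

Definition log2 {R : realType} (x : R) : R := ln x / ln 2.

Definition cq {R : realType} (q : R) : nat :=
  `|Num.ceil (4 * (1 - q) / (1 - 2 * q) ^+ 2)|%N.

Definition k_pre {R : realType} (p1 : R) (n : nat) : nat :=
  (8 * cq p1 * `|Num.ceil (ln (n%:R : R))|%N + 1)%N.

Definition k_test {R : realType} (p2 : R) (n i : nat) : nat :=
  (2 * `|Num.ceil (2 ^+ i * ln (n%:R : R))|%N * cq p2 + 1)%N.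

Definition eta {R : realType} (n : nat) : nat :=
  (1 + `|Num.ceil (log2 ((n%:R : R) / log2 (n%:R : R)))|%N)%N.

(* Test number i (0 = preliminary test on O1, i = 1..eta on O2): its length *)
Definition testlen {R : realType} (p1 p2 : R) (n : nat) (i : nat) : nat :=
  if i == 0%N then k_pre p1 n else k_test p2 n i.

Definition Kmax {R : realType} (p1 p2 : R) (n : nat) : nat :=
  \max_(i < (@eta R n).+1) testlen p1 p2 n i.

(* S' = image of the injective s : 'I_m -> T; s j is the j-th element
   considered by the process.  rank of x in S' *)
Definition rank_in {d} {T : orderType d} {m : nat} (s : 'I_m -> T) (x : T) : nat :=
  #|[set j : 'I_m | (s j < x)%O]|.

Definition in_Sminus {R : realType} {d} {T : orderType d} {m : nat}
  (s : 'I_m -> T) (rho : R) (x : T) : bool :=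
  (rank_in s x < `|Num.ceil (rho * m%:R)|)%N.

(* Sample space: all oracle answers.  Answer (j, i, t) is the t-th query of
   test i on the j-th element.  Queries with t >= testlen i are never used. *)
Definition Omega (m E K : nat) := {ffun 'I_m * 'I_E * 'I_K -> bool}.

Definition passes {R : realType} (p1 p2 : R) (n m : nat)
  (w : Omega m (@eta R n).+1 (Kmax p1 p2 n)) (j : 'I_m) (i : 'I_(@eta R n).+1) : bool :=
  (testlen p1 p2 n i <
     2 * #|[set t : 'I_(Kmax p1 p2 n) | (t < testlen p1 p2 n i)%N && w (j, i, t)]|)%N.

Definition passes_all {R : realType} (p1 p2 : R) (n m : nat)
  (w : Omega m (@eta R n).+1 (Kmax p1 p2 n)) (j : 'I_m) : bool :=
  [forall i, passes p1 p2 n m w j i].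

(* the process returns (= first element passing all tests) an element of S^-_{3/4} *)
Definition good_outcome {R : realType} (p1 p2 : R) (n m : nat) d (T : orderType d)
  (s : 'I_m -> T) (w : Omega m (@eta R n).+1 (Kmax p1 p2 n)) : bool :=
  [exists j : 'I_m, [&& passes_all p1 p2 n m w j, in_Sminus s (3 / 4 : R) (s j)
      & [forall l : 'I_m, (l < j)%N ==> ~~ passes_all p1 p2 n m w l]]].

(* probability that a single query of test i on element j says "relevant" *)
Definition bias {R : realType} d (T : orderType d) (m : nat) (s : 'I_m -> T)
  (a1 a2 : T -> R) (j : 'I_m) (i : nat) : R :=
  if i == 0%N then a1 (s j) else a2 (s j).

Definition weight {R : realType} (p1 p2 : R) (n m : nat) d (T : orderType d)
  (s : 'I_m -> T) (a1 a2 : T -> R) (w : Omega m (@eta R n).+1 (Kmax p1 p2 n)) : R :=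
  \prod_(q : 'I_m * 'I_(@eta R n).+1 * 'I_(Kmax p1 p2 n))
     (if w q then bias d T m s a1 a2 q.1.1 q.1.2 else 1 - bias d T m s a1 a2 q.1.1 q.1.2).

Definition success_prob {R : realType} (p1 p2 : R) (n m : nat) d (T : orderType d)
  (s : 'I_m -> T) (a1 a2 : T -> R) : R :=
  \sum_(w : Omega m (@eta R n).+1 (Kmax p1 p2 n) | good_outcome p1 p2 n m d T s w)
     weight p1 p2 n m d T s a1 a2 w.

From Pilot Require Import Defs.
From HB Require Import structures.
From mathcomp Require Import all_boot all_order all_algebra.
From mathcomp Require Import reals exp sequences.
From mathcomp Require Import lra zify.
Import Order.TTheory GRing.Theory Num.Theory.
Set Implicit Arguments.
Unset Strict Implicit.
Unset Printing Implicit Defensive.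
Local Open Scope ring_scope.

(* Each test is a majority vote over independent queries.  For an oracle with
   error bound p put tilt = 2(1 - p): if the vote goes the wrong way, the
   product over the queries of tilt^-1 (for a "relevant" answer) or tilt (for
   a "not relevant" one), or of the reciprocal factors, is at least 1, and its
   expectation is at most decay^k, where decay <= exp(-(1 - 2p)^2 / 2).
   The process fails only if every element of S^-_{1/6} fails some test, or
   some element outside S^-_{3/4} passes the last test.  As the queries on
   distinct elements are independent, the first event has probability at most
   (sum_i decay_i^{k_i})^{ceil(m/6)} <= (n^-3)^{m/6} = 2^{-n/2}; by a union
   bound the second has probability at most m decay^{k_eta} <= n 2^{-4n},
   because 2^eta >= 2m. *)

Lemma absz_ceil_ge {R : realType} (x : R) : 0 <= x -> x <= `|Num.ceil x|%:R.
Proof.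
move=> x0; rewrite natr_absz ger0_norm ?ceil_ge //.
by rewrite ceil_ge0 (lt_le_trans _ x0) // ltrN10.
Qed.

Lemma absz_ceil_lt {R : realType} (x : R) : 0 <= x -> `|Num.ceil x|%:R < x + 1.
Proof.
move=> x0; rewrite natr_absz ger0_norm; last by rewrite ceil_ge0 (lt_le_trans _ x0) // ltrN10.
by rewrite -ltrBlDr -[1]/(1%:~R) -intrB ceilB1_lt.
Qed.

Lemma expR_natr_ln2 {R : realType} (k : nat) : expR (k%:R * ln (2 : R)) = 2 ^+ k.
Proof. by rewrite expRM_natl lnK // posrE. Qed.

Lemma exp2_absz_ceil_log2 {R : realType} (x : R) : 1 <= x ->
  x <= 2 ^+ `|Num.ceil (log2 x)| < 2 * x.
Proof.
move=> x1; have x0 : 0 < x by apply: lt_le_trans x1.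
have ln2_gt0 : 0 < ln (2 : R) by rewrite ln_gt0 // ltr1n.
have log0 : 0 <= log2 x by rewrite /log2 divr_ge0 ?ln_ge0 ?ler1n.
have := absz_ceil_ge log0; have := absz_ceil_lt log0.
set K := `|Num.ceil (log2 x)|; rewrite /log2 => K_lt K_ge.
apply/andP; split.
  by rewrite -{1}(lnK x0) -expR_natr_ln2 ler_expR -ler_pdivrMr.
rewrite -expR_natr_ln2 -[2 * x]lnK ?posrE ?mulr_gt0 // lnM ?posrE // ltr_expR.
by move: K_lt; rewrite -(ltr_pM2r ln2_gt0) mulrDl divfK ?gt_eqF // mul1r addrC.
Qed.

Lemma exp2_lt_double_leq (K n : nat) : (4 <= n)%N -> (2 ^ K < 2 * n)%N -> (K.+2 <= n)%N.
Proof.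
move=> n4 hK; rewrite leqNgt; apply/negP => nK.
have K2 : (2 <= K)%N by lia.
have := ltn_expl (K - 2) (ltnSn 1).
move: hK; rewrite -(subnK K2) expnD subnK //; lia.
Qed.

Lemma card_ord_lt (K k : nat) : (k <= K)%N -> #|[set t : 'I_K | (t < k)%N]| = k.
Proof.
move=> kK; rewrite -sum1_card (eq_bigl (fun t : 'I_K => (t < k)%N)) => [|t]; last first.
  by rewrite inE.
by rewrite -(big_ord_widen _ (fun=> 1%N) kK) sum1_card card_ord.
Qed.

Lemma prodr_ge1 {R : numDomainType} (I : Type) (r : seq I) (P : pred I) (F : I -> R) :
  (forall i, P i -> 1 <= F i) -> 1 <= \prod_(i <- r | P i) F i.
Proof. by move=> F_ge1; elim/big_ind: _ => // x y; apply: mulr_ege1. Qed.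

Lemma sum_delta_mul {R : pzRingType} (A : finType) (a0 : A) (X : A -> R) :
  \sum_a (a == a0)%:R * X a = X a0.
Proof.
rewrite (bigD1 a0) //= eqxx mul1r big1 ?addr0 // => a /negbTE ->.
by rewrite mul0r.
Qed.

Definition bernoulli_mean {R : pzRingType} (x : R) (g : bool -> R) : R :=
  x * g true + (1 - x) * g false.

Lemma bernoulli_mean_cst {R : pzRingType} (x c : R) : bernoulli_mean x (fun=> c) = c.
Proof. by rewrite /bernoulli_mean -mulrDl addrC subrK mul1r. Qed.

Lemma bernoulli_mean_ge0 {R : numDomainType} (x : R) (g : bool -> R) :
  0 <= x <= 1 -> 0 <= g true -> 0 <= g false -> 0 <= bernoulli_mean x g.
Proof.
by case/andP => x0 x1 gt gf; rewrite addr_ge0 ?mulr_ge0 ?subr_ge0.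
Qed.

Section BernoulliProduct.
Variables (R : numDomainType) (I : finType) (b : I -> R).

Definition bernoulli_weight (w : {ffun I -> bool}) : R :=
  \prod_q (if w q then b q else 1 - b q).

Definition bernoulli_expect (f : {ffun I -> bool} -> R) : R :=
  \sum_w bernoulli_weight w * f w.

Lemma bernoulli_expect_prod (g : I -> bool -> R) :
  bernoulli_expect (fun w => \prod_q g q (w q)) = \prod_q bernoulli_mean (b q) (g q).
Proof.
transitivity (\prod_q \sum_(v : bool) (if v then b q else 1 - b q) * g q v).
  by rewrite bigA_distr_bigA; apply: eq_bigr => w _; rewrite -big_split.
by apply: eq_bigr => q _; rewrite big_bool.
Qed.

Lemma bernoulli_expect1 : bernoulli_expect (fun=> 1) = 1.
Proof.
transitivity (\prod_q bernoulli_mean (b q) (fun=> 1)); last first.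
  by apply: big1 => q _; exact: bernoulli_mean_cst.
by rewrite -bernoulli_expect_prod; apply: eq_bigr => w _; rewrite big1.
Qed.

Lemma bernoulli_expectD (f g : {ffun I -> bool} -> R) :
  bernoulli_expect (fun w => f w + g w) = bernoulli_expect f + bernoulli_expect g.
Proof. by rewrite -big_split; apply: eq_bigr => w _; rewrite mulrDr. Qed.

Lemma bernoulli_expect_sum (J : finType) (P : pred J) (f : J -> {ffun I -> bool} -> R) :
  bernoulli_expect (fun w => \sum_(j | P j) f j w) =
  \sum_(j | P j) bernoulli_expect (f j).
Proof.
by rewrite /bernoulli_expect; under eq_bigr do rewrite mulr_sumr; rewrite exchange_big.
Qed.

Hypothesis b01 : forall q, 0 <= b q <= 1.

Lemma bernoulli_weight_ge0 w : 0 <= bernoulli_weight w.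
Proof.
apply: prodr_ge0 => q _; have /andP[b0 b1] := b01 q.
by case: (w q); rewrite ?subr_ge0.
Qed.

Lemma ler_bernoulli_expect (f g : {ffun I -> bool} -> R) :
  (forall w, f w <= g w) -> bernoulli_expect f <= bernoulli_expect g.
Proof.
by move=> fg; apply: ler_sum => w _; rewrite ler_wpM2l ?bernoulli_weight_ge0.
Qed.

End BernoulliProduct.

Section IndependentBlocks.
Variables (R : numDomainType) (J A K : finType) (b : J * A * K -> R).

Lemma prod_on_graph (f : J -> A) (H : J -> A -> K -> R) :
  \prod_(q : J * A * K) (if q.1.2 == f q.1.1 then H q.1.1 q.1.2 q.2 else 1) =
  \prod_j \prod_k H j (f j) k.
Proof.
rewrite -(pair_bigA _ (fun x k => if x.2 == f x.1 then H x.1 x.2 k else 1)) /=.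
rewrite -(pair_bigA _ (fun j a => \prod_k if a == f j then H j a k else 1)) /=.
apply: eq_bigr => j _; rewrite (bigD1 (f j)) //= eqxx [X in _ * X]big1 ?mulr1 //.
by move=> a /negbTE ne; apply: big1 => k _; rewrite ne.
Qed.

Lemma bernoulli_expect_prod_sum (c : J -> A -> R) (F : J -> A -> K -> bool -> R) :
  bernoulli_expect b (fun w => \prod_j \sum_a c j a * \prod_k F j a k (w (j, a, k))) =
  \prod_j \sum_a c j a * \prod_k bernoulli_mean (b (j, a, k)) (F j a k).
Proof.
pose G (f : J -> A) q := if q.1.2 == f q.1.1 then F q.1.1 q.1.2 q.2 else fun=> 1.
have restrict f (w : {ffun J * A * K -> bool}) :
    \prod_j \prod_k F j (f j) k (w (j, f j, k)) = \prod_q G f q (w q).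
  rewrite -(prod_on_graph f (fun j a k => F j a k (w (j, a, k)))).
  by apply: eq_bigr => -[[j a] k] _; rewrite /G /=; case: eqP.
rewrite /bernoulli_expect.
under [LHS]eq_bigr do rewrite bigA_distr_bigA /= mulr_sumr.
rewrite exchange_big [RHS]bigA_distr_bigA /=; apply: eq_bigr => f _.
under eq_bigr do rewrite big_split /= restrict mulrCA.
rewrite -mulr_sumr.
have := bernoulli_expect_prod b (G f); rewrite /bernoulli_expect => ->.
rewrite big_split /=; congr (_ * _).
rewrite -(prod_on_graph f (fun j a k => bernoulli_mean (b (j, a, k)) (F j a k))).
by apply: eq_bigr => -[[j a] k] _; rewrite /G /=; case: eqP; rewrite ?bernoulli_mean_cst.
Qed.

Lemma bernoulli_expect_prod_in_sum (P : pred J) (a0 : A) (F : J -> A -> K -> bool -> R) :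
  bernoulli_expect b (fun w => \prod_(j | P j) \sum_a \prod_k F j a k (w (j, a, k))) =
  \prod_(j | P j) \sum_a \prod_k bernoulli_mean (b (j, a, k)) (F j a k).
Proof.
(* [a0] serves to write each factor outside [P] as [\sum_a (a == a0)%:R * 1]. *)
pose c j a : R := if P j then 1 else (a == a0)%:R.
pose F' j a := if P j then F j a else fun _ _ => 1.
rewrite [RHS]big_mkcond /=.
transitivity (\prod_j \sum_a c j a * \prod_k bernoulli_mean (b (j, a, k)) (F' j a k)); last first.
  apply: eq_bigr => j _; rewrite /c /F'; case: (P j) => /=.
    by under eq_bigr do rewrite mul1r.
  by rewrite sum_delta_mul big1 // => k _; rewrite bernoulli_mean_cst.
rewrite -bernoulli_expect_prod_sum /bernoulli_expect; apply: eq_bigr => w _.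
congr (_ * _); rewrite big_mkcond /=; apply: eq_bigr => j _; rewrite /c /F'.
case: (P j) => /=; last by rewrite sum_delta_mul big1.
by under [RHS]eq_bigr do rewrite mul1r.
Qed.

Lemma bernoulli_expect_prod_block (j0 : J) (a0 : A) (F : K -> bool -> R) :
  bernoulli_expect b (fun w => \prod_k F k (w (j0, a0, k))) =
  \prod_k bernoulli_mean (b (j0, a0, k)) (F k).
Proof.
pose F' j (a : A) k := if j == j0 then F k else fun=> 1.
have collapse (X : J -> A -> K -> R) : \prod_j \sum_a (a == a0)%:R *
    \prod_k (if j == j0 then X j a k else 1) = \prod_k X j0 a0 k.
  under eq_bigr do rewrite sum_delta_mul.
  rewrite (bigD1 j0) //= eqxx [X in _ * X]big1 ?mulr1 //.
  by move=> j /negbTE ne; apply: big1 => k _; rewrite ne.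
transitivity (bernoulli_expect b (fun w =>
    \prod_j \sum_a (a == a0)%:R * \prod_k F' j a k (w (j, a, k)))).
  rewrite /bernoulli_expect; apply: eq_bigr => w _; congr (_ * _).
  rewrite -(collapse (fun j a k => F k (w (j, a, k)))).
  by apply: eq_bigr => j _; apply: eq_bigr => a _; rewrite /F'; case: (j == j0).
rewrite bernoulli_expect_prod_sum -(collapse (fun j a k => bernoulli_mean (b (j, a, k)) (F k))).
apply: eq_bigr => j _; apply: eq_bigr => a _; rewrite /F'; case: (j == j0) => //.
by congr (_ * _); apply: eq_bigr => k _; rewrite bernoulli_mean_cst.
Qed.

End IndependentBlocks.

Section MajorityVote.
Variables (R : realFieldType) (K : nat).

Definition vote_weight (l : R) (k : nat) (t : 'I_K) (v : bool) : R :=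
  if (t < k)%N then (if v then l^-1 else l) else 1.

Lemma vote_weight_ge0 (l : R) (k : nat) t v : 0 < l -> 0 <= vote_weight l k t v.
Proof. by move=> l0; rewrite /vote_weight; case: ifP => //; case: v; rewrite ?invr_ge0 ltW. Qed.


Lemma prod_vote_weight (l : R) (k : nat) (f : 'I_K -> bool) : (k <= K)%N ->
  \prod_t vote_weight l k t (f t) =
  l ^+ (k - #|[set t : 'I_K | (t < k)%N && f t]|) / l ^+ #|[set t : 'I_K | (t < k)%N && f t]|.
Proof.
move=> kK; rewrite -big_mkcond /= (bigID f) /= mulrC.
have count_false : #|[set t : 'I_K | (t < k)%N && ~~ f t]| =
    (k - #|[set t : 'I_K | (t < k)%N && f t]|)%N.
  suff : (#|[set t : 'I_K | (t < k)%N && f t]| +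
      #|[set t : 'I_K | (t < k)%N && ~~ f t]|)%N = k by lia.
  rewrite -[RHS](card_ord_lt kK) -[in RHS](cardID [set t : 'I_K | f t]).
  by congr (_ + _)%N; apply: eq_card => t; rewrite !inE // andbC.
rewrite -count_false -exprVn -!prodr_const; congr (_ * _); rewrite big_mkcond [RHS]big_mkcond.
  by apply: eq_bigr => t _; rewrite inE; case: (f t); case: (t < k)%N.
by apply: eq_bigr => t _; rewrite inE; case: (f t); case: (t < k)%N.
Qed.

Lemma minority_vote_weight_ge1 (l : R) (k : nat) (f : 'I_K -> bool) :
  1 <= l -> (k <= K)%N -> ~~ (k < 2 * #|[set t : 'I_K | (t < k)%N && f t]|)%N ->
  1 <= \prod_t vote_weight l k t (f t).
Proof.
move=> l1 kK minority; have l0 : 0 < l by apply: lt_le_trans l1.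
rewrite prod_vote_weight // ler_pdivlMr ?exprn_gt0 // mul1r.
apply: ler_weXn2l => //; lia.
Qed.

Lemma majority_vote_weight_ge1 (l : R) (k : nat) (f : 'I_K -> bool) :
  1 <= l -> (k <= K)%N -> (k < 2 * #|[set t : 'I_K | (t < k)%N && f t]|)%N ->
  1 <= \prod_t vote_weight l^-1 k t (f t).
Proof.
move=> l1 kK majority; have l0 : 0 < l by apply: lt_le_trans l1.
rewrite prod_vote_weight // !exprVn invrK mulrC ler_pdivlMr ?exprn_gt0 // mul1r.
apply: ler_weXn2l => //; lia.
Qed.

Lemma prod_bernoulli_mean_vote_weight_le (x : 'I_K -> R) (l r : R) (k : nat) :
  (k <= K)%N -> 0 < l -> (forall t, 0 <= x t <= 1) ->
  (forall t, x t / l + (1 - x t) * l <= r) ->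
  \prod_t bernoulli_mean (x t) (vote_weight l k t) <= r ^+ k.
Proof.
move=> kK l0 x01 xr.
rewrite -[in r ^+ _](card_ord_lt kK) -prodr_const [X in _ <= X]big_mkcond /=.
apply: ler_prod => t _; rewrite /bernoulli_mean /vote_weight inE.
case: ifP => _; last by rewrite !mulr1 addrC subrK lexx ler01.
have /andP[x0 x1] := x01 t.
have l_ge0 := ltW l0; apply/andP; split; last exact: xr.
by rewrite addr_ge0 // mulr_ge0 // ?invr_ge0 // subr_ge0.
Qed.

End MajorityVote.

Section ExponentialTilt.
Variables (R : realType) (p : R).
Hypothesis p_small : 0 <= p < 1 / 2.

(* [decay = (1 - p) / tilt + p * tilt = 1 - (1 - 2p)^2 / 2]. *)
Definition tilt : R := 2 - 2 * p.
Definition decay : R := 1 / 2 + 2 * p - 2 * p ^+ 2.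

Lemma tilt_ge1 : 1 <= tilt.
Proof. by rewrite /tilt; case/andP: p_small => *; lra. Qed.

Lemma tilt_gt0 : 0 < tilt.
Proof. exact: lt_le_trans ltr01 tilt_ge1. Qed.

Lemma tilted_mean_le_decay x : 1 - p <= x <= 1 -> x / tilt + (1 - x) * tilt <= decay.
Proof.
case/andP: p_small => p0 p1 /andP[x0 x1]; have t0 := tilt_gt0.
rewrite -(ler_pM2r t0) mulrDl -mulrA mulVf ?gt_eqF // mulr1.
have tilt_sq : 1 <= tilt * tilt by rewrite /tilt; nra.
suff : 0 <= (tilt * tilt - 1) * (x - (1 - p)) by rewrite /decay /tilt; nra.
by apply: mulr_ge0; lra.
Qed.

Lemma inv_tilted_mean_le_decay x : 0 <= x <= p -> x / tilt^-1 + (1 - x) * tilt^-1 <= decay.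
Proof.
case/andP => x0 xp; have := @tilted_mean_le_decay (1 - x).
rewrite opprB addrCA subrr addr0 => h; rewrite invrK addrC; apply: h.
by apply/andP; split; lra.
Qed.

Lemma decay_ge0 : 0 <= decay.
Proof. by rewrite /decay; case/andP: p_small => *; nra. Qed.

Lemma decay_le1 : decay <= 1.
Proof. by rewrite /decay; case/andP: p_small => *; nra. Qed.

Lemma cq_mul_sqr_ge2 : 2 <= (cq p)%:R * (1 - 2 * p) ^+ 2.
Proof.
case/andP: p_small => p0 p1.
have e0 : 0 < (1 - 2 * p) ^+ 2 by rewrite exprn_gt0 //; lra.
have c0 : 0 <= 4 * (1 - p) / (1 - 2 * p) ^+ 2 by rewrite divr_ge0 ?ltW //; lra.
have := absz_ceil_ge c0; rewrite -/(cq p) -(ler_pM2r e0) divfK ?gt_eqF //.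
by lra.
Qed.

Lemma decay_expn_le (M k : nat) (x : R) : x <= M%:R -> (2 * cq p * M <= k)%N ->
  decay ^+ k <= expR (- (2 * x)).
Proof.
move=> xM kM; apply: le_trans (ler_wiXn2l decay_ge0 decay_le1 kM) _.
have decay_exp : decay <= expR (- ((1 - 2 * p) ^+ 2 / 2)).
  by apply: le_trans (expR_ge1Dx _); rewrite /decay; lra.
apply: le_trans (lerXn2r _ _ _ decay_exp) _; rewrite ?nnegrE ?decay_ge0 ?expR_ge0 //.
rewrite -expRM_natr ler_expR !natrM.
have : 0 <= ((cq p)%:R * (1 - 2 * p) ^+ 2 - 2) * M%:R.
  by rewrite mulr_ge0 // subr_ge0 cq_mul_sqr_ge2.
by lra.
Qed.

End ExponentialTilt.

Section Rank.
Variables (d : Order.disp_t) (T : orderType d) (m : nat) (s : 'I_m -> T).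
Hypothesis s_inj : injective s.

Lemma rank_in_lt j : (rank_in s (s j) < m)%N.
Proof.
have : [set l : 'I_m | (s l < s j)%O] \subset [set~ j].
  by apply/subsetP => l; rewrite !inE; apply: contraTneq => ->; rewrite ltxx.
move/subset_leq_card; rewrite cardsC1 card_ord /rank_in; have := ltn_ord j; lia.
Qed.

Lemma rank_in_lt_mono j l : (s j < s l)%O -> (rank_in s (s j) < rank_in s (s l))%N.
Proof.
move=> jl; apply: proper_card; apply/properP; split.
  by apply/subsetP => x; rewrite !inE => /lt_trans; apply.
by exists j; rewrite !inE ?jl ?ltxx.
Qed.

Definition rank_ord (j : 'I_m) : 'I_m := Ordinal (rank_in_lt j).

Lemma rank_ord_inj : injective rank_ord.
Proof.
move=> j l /(congr1 val) /= eq_rank; apply: s_inj.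
by case: (ltgtP (s j) (s l)) => // /rank_in_lt_mono; rewrite eq_rank ltnn.
Qed.

Lemma card_rank_in_lt r : (r <= m)%N -> #|[set j : 'I_m | (rank_in s (s j) < r)%N]| = r.
Proof.
move=> rm; rewrite -[RHS](card_ord_lt rm) -[in RHS](card_preimset _ rank_ord_inj).
by apply: eq_card => j; rewrite !inE.
Qed.

End Rank.

Lemma in_Sminus_le {R : realType} d (T : orderType d) m (s : 'I_m -> T) (r1 r2 : R) x :
  0 <= r1 <= r2 -> in_Sminus s r1 x -> in_Sminus s r2 x.
Proof.
case/andP => r1_ge0 r12; rewrite /in_Sminus => /leq_trans; apply.
have absz_ceil (r : R) : 0 <= r -> `|Num.ceil (r * m%:R)|%:Z = Num.ceil (r * m%:R).
  by move=> r0; apply: gez0_abs; rewrite ceil_ge0 (lt_le_trans (ltrN10 _)) ?mulr_ge0.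
by rewrite -lez_nat !absz_ceil ?(le_trans r1_ge0) // le_ceil // ler_wpM2r.
Qed.

Section Sizes.
Variables (R : realType) (n m : nat).
Hypotheses (n_ge4 : (4 <= n)%N) (m_def : (m%:R : R) = n%:R / log2 (n%:R : R)).

Let ln2_gt0 : 0 < ln (2 : R).
Proof. by rewrite ln_gt0 // ltr1n. Qed.

Let ln_n_gt0 : 0 < ln (n%:R : R).
Proof. by rewrite ln_gt0 // ltr1n; lia. Qed.

Lemma m_mul_ln : m%:R * ln (n%:R : R) = n%:R * ln 2.
Proof. by rewrite m_def /log2 invf_div mulrA divfK ?gt_eqF. Qed.

Lemma m_gt0 : (0 < m)%N.
Proof. by rewrite -(ltr0n R) m_def divr_gt0 ?ltr0n ?divr_gt0 //; lia. Qed.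

Lemma m_le_n : (m <= n)%N.
Proof.
rewrite -(ler_nat R) -(ler_pM2r ln_n_gt0) m_mul_ln ler_pM2l ?ltr0n; last lia.
by rewrite ler_ln ?posrE ?ler_nat ?ltr0n //; lia.
Qed.

Lemma eta_eq : @Defs.eta R n = `|Num.ceil (log2 (m%:R : R))|.+1.
Proof. by rewrite /Defs.eta -m_def add1n. Qed.

Let exp2_eta_bounds : (m%:R : R) <= 2 ^+ `|Num.ceil (log2 (m%:R : R))| < 2 * (m%:R : R).
Proof. by apply: exp2_absz_ceil_log2; rewrite ler1n m_gt0. Qed.

Lemma two_m_le_exp_eta : 2 * m%:R <= (2 : R) ^+ @Defs.eta R n.
Proof. by rewrite eta_eq exprS ler_pM2l //; case/andP: exp2_eta_bounds. Qed.

Lemma eta_lt_n : ((@Defs.eta R n).+1 <= n)%N.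
Proof.
rewrite eta_eq; apply: (exp2_lt_double_leq n_ge4).
rewrite -(ltr_nat R) natrX natrM; case/andP: exp2_eta_bounds => _ /lt_le_trans; apply.
by rewrite ler_pM2l // ler_nat m_le_n.
Qed.

End Sizes.

Definition test_param {R : numFieldType} (p1 p2 : R) (i : nat) : R :=
  if i == 0%N then p1 else p2.

Lemma test_param_small {R : numFieldType} (p1 p2 : R) i :
  0 <= p1 < 1 / 2 -> 0 <= p2 < 1 / 2 -> 0 <= test_param p1 p2 i < 1 / 2.
Proof. by rewrite /test_param; case: ifP. Qed.

Section TestLengths.
Variables (R : realType) (p1 p2 : R) (n : nat).
Hypotheses (p2_small : 0 <= p2 < 1 / 2) (n_gt1 : (1 < n)%N).

Let ln_n_ge0 : 0 <= ln (n%:R : R).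
Proof. by rewrite ln_ge0 // ler1n; lia. Qed.

Lemma decay_testlen_pos_le i : (0 < i)%N ->
  decay p2 ^+ testlen p1 p2 n i <= expR (- (2 * (2 ^+ i * ln (n%:R : R)))).
Proof.
move=> i_gt0; rewrite /testlen gtn_eqF //.
have x_ge0 : 0 <= 2 ^+ i * ln (n%:R : R) by rewrite mulr_ge0 ?exprn_ge0.
by apply: (decay_expn_le p2_small (absz_ceil_ge x_ge0)); rewrite /k_test; lia.
Qed.

Hypothesis p1_small : 0 <= p1 < 1 / 2.

Lemma decay_testlen_le i :
  decay (test_param p1 p2 i) ^+ testlen p1 p2 n i <= expR (- (4 * ln (n%:R : R))).
Proof.
case: (posnP i) => [->|i_gt0].
  have ln_le : 4 * ln (n%:R : R) <= (4 * `|Num.ceil (ln (n%:R : R))|)%N%:R.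
    by rewrite natrM ler_pM2l ?absz_ceil_ge ?ltr0n.
  apply: le_trans (decay_expn_le p1_small ln_le _) _; first by rewrite /testlen /= /k_pre; lia.
  by rewrite ler_expR lerN2 ler_peMl ?mulr_ge0 ?ler1n.
rewrite /test_param gtn_eqF //; apply: le_trans (decay_testlen_pos_le i_gt0) _.
rewrite ler_expR lerN2 mulrA ler_wpM2r //.
have : (2 : R) <= 2 ^+ i by rewrite -[X in X <= _]expr1 ler_weXn2l // ler1n.
by lra.
Qed.

End TestLengths.

Section Process.
Variables (R : realType) (p1 p2 : R) (n m : nat) (d : Order.disp_t) (T : orderType d)
  (s : 'I_m -> T) (a1 a2 : T -> R).
Hypotheses (p1_small : 0 <= p1 < 1 / 2) (p2_small : 0 <= p2 < 1 / 2)
  (a1_01 : forall x, 0 <= a1 x <= 1) (a2_01 : forall x, 0 <= a2 x <= 1).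

Local Notation ntests := (@Defs.eta R n).+1.
Local Notation K := (Kmax p1 p2 n).
Local Notation outcome := (Omega m ntests K).
Local Notation k := (testlen p1 p2 n).
Local Notation good_outcome := (good_outcome p1 p2 n m d T s).

(* [weight] is [bernoulli_weight query_bias] up to conversion. *)
Definition query_bias (q : 'I_m * 'I_ntests * 'I_K) : R := bias d T m s a1 a2 q.1.1 q.1.2.

Local Notation expect := (bernoulli_expect query_bias).

Lemma query_bias01 q : 0 <= query_bias q <= 1.
Proof. by rewrite /query_bias /bias; case: ifP. Qed.

Lemma testlen_le_Kmax (i : 'I_ntests) : (k i <= K)%N.
Proof. exact: (@leq_bigmax _ (fun i : 'I_ntests => k i) i). Qed.

Definition good : {set 'I_m} := [set j | in_Sminus s (1 / 6 : R) (s j)].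
Definition bad : {set 'I_m} := [set j | ~~ in_Sminus s (3 / 4 : R) (s j)].
Definition last_test : 'I_ntests := ord_max.

Lemma failure_cases (w : outcome) : ~~ good_outcome w ->
  (forall j, j \in good -> ~~ passes_all p1 p2 n m w j) \/
  (exists2 j, j \in bad & passes p1 p2 n m w j last_test).
Proof.
move=> failed; case: (pickP (passes_all p1 p2 n m w)) => [j0 passed | none]; last first.
  by left => j _; rewrite none.
right; case: (arg_minnP (fun j : 'I_m => nat_of_ord j) passed) => j passed_j first_j.
exists j; last by move/forallP: passed_j; apply.
rewrite inE; apply: contra failed => returned; apply/existsP; exists j.
rewrite passed_j returned; apply/forallP => l; apply/implyP => lj.
by apply: contraL lj => /first_j; rewrite -leqNgt.
Qed.

Definition fail_witness (w : outcome) : R :=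
  \prod_(j in good) \sum_(i < ntests)
    \prod_(t < K) vote_weight (tilt (test_param p1 p2 i)) (k i) t (w (j, i, t)).

Definition pass_witness (w : outcome) : R :=
  \sum_(j in bad) \prod_(t < K) vote_weight (tilt p2)^-1 (k last_test) t (w (j, last_test, t)).

Lemma failure_indicator_le w :
  ((~~ good_outcome w)%:R : R) <= fail_witness w + pass_witness w.
Proof.
have tilt_pos i : 0 < tilt (test_param p1 p2 i) by apply/tilt_gt0/test_param_small.
have fail_ge0 : 0 <= fail_witness w.
  by apply: prodr_ge0 => j _; apply: sumr_ge0 => i _; apply: prodr_ge0 => t _;
    exact: vote_weight_ge0.
have pass_ge0 : 0 <= pass_witness w.
  apply: sumr_ge0 => j _; apply: prodr_ge0 => t _.
  by apply: vote_weight_ge0; rewrite invr_gt0 tilt_gt0.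
have sum_ge1 (J : finType) (P : pred J) j0 (F : J -> R) :
    P j0 -> (forall j, 0 <= F j) -> 1 <= F j0 -> 1 <= \sum_(j | P j) F j.
  move=> Pj0 F_ge0 F_ge1; rewrite (bigD1 j0) //=.
  by apply: ler_wpDr F_ge1; apply: sumr_ge0.
case: (boolP (good_outcome w)) => [_|/failure_cases [all_fail|[j j_bad pass_j]]] /=.
- by rewrite addr_ge0.
- apply: ler_wpDr pass_ge0 _; apply: prodr_ge1 => j /all_fail.
  rewrite negb_forall => /existsP[i fail_i].
  apply: (sum_ge1 _ _ i) => // [i'|].
    by apply: prodr_ge0 => t _; apply: vote_weight_ge0.
  apply: minority_vote_weight_ge1 fail_i; last exact: testlen_le_Kmax.
  exact/tilt_ge1/test_param_small.
- apply: ler_wpDl fail_ge0 _; apply: (sum_ge1 _ _ j) => // [j'|].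
    by apply: prodr_ge0 => t _; apply: vote_weight_ge0; rewrite invr_gt0 tilt_gt0.
  apply: majority_vote_weight_ge1 pass_j; [exact: tilt_ge1 | exact: testlen_le_Kmax].
Qed.

Lemma one_sub_success_prob :
  1 - success_prob p1 p2 n m d T s a1 a2 = expect (fun w => (~~ good_outcome w)%:R).
Proof.
have -> : success_prob p1 p2 n m d T s a1 a2 = expect (fun w => (good_outcome w)%:R).
  rewrite /success_prob big_mkcond; apply: eq_bigr => w _.
  by case: (good_outcome w); rewrite ?mulr1 ?mulr0.
rewrite -{1}(bernoulli_expect1 query_bias) /bernoulli_expect -sumrB.
by apply: eq_bigr => w _; case: (good_outcome w); rewrite ?mulr1 ?mulr0 ?subrr ?subr0.
Qed.

Hypotheses (a1_good : forall j, in_Sminus s (1 / 6 : R) (s j) -> 1 - p1 <= a1 (s j))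
  (a2_good : forall j, in_Sminus s (1 / 3 : R) (s j) -> 1 - p2 <= a2 (s j))
  (a2_bad : forall j, ~~ in_Sminus s (3 / 4 : R) (s j) -> a2 (s j) <= p2).

Lemma good_bias j (i : 'I_ntests) t :
  j \in good -> 1 - test_param p1 p2 i <= query_bias (j, i, t).
Proof.
rewrite inE /query_bias /bias /test_param /= => j_good; case: ifP => _; first exact: a1_good.
by apply/a2_good/(in_Sminus_le _ j_good); apply/andP; split; lra.
Qed.

Lemma expect_fail_witness_le :
  expect fail_witness <= (\sum_(i < ntests) decay (test_param p1 p2 i) ^+ k i) ^+ #|good|.
Proof.
rewrite /fail_witness (bernoulli_expect_prod_in_sum _ _ ord0
  (fun _ i => vote_weight (tilt (test_param p1 p2 i)) (k i))) -prodr_const.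
have tilt_pos i : 0 < tilt (test_param p1 p2 i) by apply/tilt_gt0/test_param_small.
apply: ler_prod => j j_good; apply/andP; split.
  apply: sumr_ge0 => i _; apply: prodr_ge0 => t _.
  by apply: bernoulli_mean_ge0; rewrite ?query_bias01 ?vote_weight_ge0.
apply: ler_sum => i _; apply: prod_bernoulli_mean_vote_weight_le => // [|t|t].
- exact: testlen_le_Kmax.
- exact: query_bias01.
apply: (tilted_mean_le_decay (test_param_small i p1_small p2_small)).
by rewrite good_bias //; case/andP: (query_bias01 (j, i, t)).
Qed.

Lemma expect_pass_witness_le : expect pass_witness <= m%:R * decay p2 ^+ k last_test.
Proof.
rewrite bernoulli_expect_sum.
apply: le_trans (_ : \sum_(j in bad) decay p2 ^+ k last_test <= _).
  apply: ler_sum => j j_bad; rewrite bernoulli_expect_prod_block.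
  apply: prod_bernoulli_mean_vote_weight_le.
  - exact: testlen_le_Kmax.
  - by rewrite invr_gt0 tilt_gt0.
  - by move=> t; exact: query_bias01.
  move=> t; apply: (inv_tilted_mean_le_decay p2_small); apply/andP; split.
    by case/andP: (query_bias01 (j, last_test, t)).
  by move: j_bad; rewrite inE /query_bias /bias /= => /a2_bad.
rewrite sumr_const -[_ *+ #|bad|]mulr_natl ler_wpM2r ?exprn_ge0 ?decay_ge0 // ler_nat.
by rewrite (leq_trans (max_card _)) ?card_ord.
Qed.

Lemma failure_prob_le : 1 - success_prob p1 p2 n m d T s a1 a2 <=
  (\sum_(i < ntests) decay (test_param p1 p2 i) ^+ k i) ^+ #|good| + m%:R * decay p2 ^+ k last_test.
Proof.
rewrite one_sub_success_prob.
apply: le_trans (ler_bernoulli_expect query_bias01 failure_indicator_le) _.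
by rewrite bernoulli_expectD lerD // (expect_fail_witness_le, expect_pass_witness_le).
Qed.

End Process.

Section Bounds.
Variables (R : realType) (p1 p2 : R) (n m : nat).
Hypotheses (p2_small : 0 <= p2 < 1 / 2) (n_ge4 : (4 <= n)%N)
  (m_def : (m%:R : R) = n%:R / log2 (n%:R : R)).

Let n_gt1 : (1 < n)%N. Proof. by lia. Qed.

Let ln_n_gt0 : 0 < ln (n%:R : R).
Proof. by rewrite ln_gt0 // ltr1n. Qed.

Lemma bad_term_le :
  m%:R * decay p2 ^+ testlen p1 p2 n (last_test R n) <= n%:R * expR (- (4 * (n%:R * ln 2))).
Proof.
have eta_gt0 : (0 < @Defs.eta R n)%N by rewrite (eta_eq m_def).
apply: ler_pM; rewrite ?ler0n ?exprn_ge0 ?decay_ge0 ?ler_nat ?(m_le_n n_ge4 m_def) //.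
apply: le_trans (decay_testlen_pos_le p1 p2_small n_gt1 eta_gt0) _.
rewrite ler_expR lerN2 -(m_mul_ln n_ge4 m_def).
have := ler_wpM2r (ltW ln_n_gt0) (two_m_le_exp_eta n_ge4 m_def).
(* Hiding the power of 2 keeps lra from normalizing it. *)
by move: (2 ^+ _) => E; lra.
Qed.

Hypothesis p1_small : 0 <= p1 < 1 / 2.

Lemma sum_decay_testlen_le :
  \sum_(i < (@Defs.eta R n).+1) decay (test_param p1 p2 i) ^+ testlen p1 p2 n i <=
  expR (- (3 * ln (n%:R : R))).
Proof.
apply: le_trans (_ : \sum_(i < (@Defs.eta R n).+1) expR (- (4 * ln (n%:R : R))) <= _).
  by apply: ler_sum => i _; apply: decay_testlen_le.
rewrite sumr_const card_ord -(mulr_natl (expR _) (Defs.eta n).+1).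
apply: le_trans (_ : n%:R * expR (- (4 * ln (n%:R : R))) <= _).
  by rewrite ler_wpM2r ?expR_ge0 // ler_nat (eta_lt_n n_ge4 m_def).
have n_pos : (0 : R) < n%:R by rewrite ltr0n; lia.
by rewrite -{1}[n%:R]lnK ?posrE // -expRD ler_expR; lra.
Qed.

Lemma good_term_le d (T : orderType d) (s : 'I_m -> T) : injective s ->
  (\sum_(i < (@Defs.eta R n).+1) decay (test_param p1 p2 i) ^+ testlen p1 p2 n i) ^+ #|good R s|
  <= expR (- (n%:R * ln 2 / 2)).
Proof.
move=> s_inj; set r := `|Num.ceil (1 / 6 * (m%:R : R))|%N.
have sixth_ge0 : (0 : R) <= 1 / 6 * m%:R by rewrite mulr_ge0 //; lra.
have r_le_m : (r <= m)%N.
  have := absz_ceil_lt sixth_ge0; rewrite -/r => r_lt.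
  have : (r%:R : R) < (m + 1)%:R by rewrite natrD; have : (0 : R) <= m%:R by []; lra.
  by rewrite ltr_nat addn1 ltnS.
have card_good : #|good R s| = r.
  by rewrite -(card_rank_in_lt s_inj r_le_m); apply: eq_card => j; rewrite !inE.
have sum_ge0 : 0 <= \sum_(i < (@Defs.eta R n).+1) decay (test_param p1 p2 i) ^+ testlen p1 p2 n i.
  by apply: sumr_ge0 => i _; rewrite exprn_ge0 // decay_ge0 // test_param_small.
apply: le_trans (lerXn2r _ _ _ sum_decay_testlen_le) _; rewrite ?nnegrE ?expR_ge0 //.
rewrite card_good -expRM_natl ler_expR -(m_mul_ln n_ge4 m_def).
have := absz_ceil_ge sixth_ge0; rewrite -/r => r_ge.
have gap : (0 : R) <= r%:R - 1 / 6 * m%:R by rewrite subr_ge0.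
by have := mulr_ge0 (ltW ln_n_gt0) gap; nra.
Qed.

End Bounds.

Lemma tail_sum_le {R : realType} (n : nat) : (4 <= n)%N ->
  expR (- (n%:R * ln 2 / 2)) + n%:R * expR (- (4 * (n%:R * ln 2))) <= powR (2 : R) (- (n%:R / 5)).
Proof.
move=> n_ge4; set u := n%:R * ln (2 : R).
have ln2_gt0 : 0 < ln (2 : R) by rewrite ln_gt0 // ltr1n.
have n_le : n%:R <= expR u by rewrite /u expR_natr_ln2 -natrX ler_nat ltnW // ltn_expl.
have small : n%:R * expR (- (4 * u)) <= expR (- (u / 2)).
  apply: le_trans (ler_wpM2r (expR_ge0 _) n_le) _.
  by rewrite -expRD ler_expR /u; have : (0 : R) <= n%:R by []; nra.
have two_le : 2 * expR (- (u / 2)) <= expR (- (n%:R / 5) * ln 2).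
  have -> : 2 * expR (- (u / 2)) = expR (ln 2 - u / 2) by rewrite expRD lnK // posrE.
  rewrite ler_expR /u.
  have : (4 : R) <= n%:R by rewrite (ler_nat R 4).
  by nra.
have -> : powR 2 (- (n%:R / 5)) = expR (- (n%:R / 5) * ln (2 : R)).
  by rewrite (mulrC (- _)) expRM lnK // posrE.
by lra.
Qed.

Theorem lemma16 (R : realType) (p1 p2 : R) :
  0 <= p1 < 1 / 2 -> 0 <= p2 < 1 / 2 ->
  exists N : nat, forall n : nat, (N <= n)%N ->
  forall m : nat, (m%:R : R) = n%:R / log2 (n%:R : R) ->
  forall (d : Order.disp_t) (T : orderType d) (s : 'I_m -> T), injective s ->
  forall a1 a2 : T -> R,
    (forall x, 0 <= a1 x <= 1) -> (forall x, 0 <= a2 x <= 1) ->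
    (forall j, in_Sminus s (1 / 6 : R) (s j) -> 1 - p1 <= a1 (s j)) ->
    (forall j, ~~ in_Sminus s (1 / 3 : R) (s j) -> a1 (s j) <= p1) ->
    (forall j, in_Sminus s (1 / 3 : R) (s j) -> 1 - p2 <= a2 (s j)) ->
    (forall j, ~~ in_Sminus s (3 / 4 : R) (s j) -> a2 (s j) <= p2) ->
    1 - powR 2 (- (n%:R / 5)) <= success_prob p1 p2 n m d T s a1 a2.
Proof.
move=> p1_small p2_small; exists 4%N => n n_ge4 m m_def d T s s_inj a1 a2 a1_01 a2_01.
move=> a1_good _ a2_good a2_bad.
have fail_le := failure_prob_le n p1_small p2_small a1_01 a2_01 a1_good a2_good a2_bad.
have good_le := good_term_le p2_small n_ge4 m_def p1_small s_inj.
have bad_le := bad_term_le p1 p2_small n_ge4 m_def.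
have := le_trans fail_le (le_trans (lerD good_le bad_le) (tail_sum_le (R := R) n_ge4)).
by rewrite !lerBlDr addrC.
Qed.
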